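(* Let $(X_{m,t})$ be a random array in $\Omega^{M\times(T+1)}$ whose rows are independent, each row $m$ being a Markov chain with transition matrix $P_m$. Then for all $i\in\Omega$, $\varepsilon>0$ and $0<s_1\le s_2$, \[ \Pr\big(\|\hat P_{i,:}-\tilde P_{i,:}\|_1\ge\varepsilon,\ s_1\le N_i\le s_2\big) \ \le\ (1+|\Omega|)\exp\left(-\frac{3\varepsilon^2 s_1}{6\sqrt2|\Omega|s_2/s_1 + 2\sqrt2|\Omega|^{1/2}\varepsilon}\right). \]
   Context: $\Omega$ is a finite set, $M,T\ge1$ integers, rows indexed by $m=1,\dots,M$ and columns by $t=0,\dots,T$. Let $N_{m,i}=\sum_{t=1}^T1(X_{m,t-1}=i)$, $N_i=\sum_mN_{m,i}$, $N_{i,j}=\sum_{m=1}^M\sum_{t=1}^T1(X_{m,t-1}=i,X_{m,t}=j)$. The empirical transition matrix is $\hat P_{i,j}=N_{i,j}/N_i$ if $N_i>0$ and $1/|\Omega|$ otherwise. Define $\tilde P_{i,j}=\sum_m\frac{N_{m,i}}{N_i}P_m(i,j)$ if $N_i>0$ and $1/|\Omega|$ otherwise. $\|\cdot\|_1$ is the $\ell_1$ norm of a row vector. *)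

From HB Require Import structures.
From mathcomp Require Import all_boot all_order all_algebra.
From mathcomp Require Import reals sequences exp.
Set Implicit Arguments. Unset Strict Implicit. Unset Printing Implicit Defensive.
Import Order.TTheory GRing.Theory Num.Theory.
Local Open Scope ring_scope.

(* An array x in Omega^{M x (T+1)}: rows m : 'I_M (paper's m = 1..M),
   columns t : 'I_T.+1 (paper's t = 0..T). *)
Definition array (Omega : finType) (M T : nat) :=
  {ffun 'I_M -> {ffun 'I_T.+1 -> Omega}}.

(* For t : 'I_T (t = 0..T-1), the paper's pair (X_{m,t}, X_{m,t+1}),
   i.e. (X_{m,t'-1}, X_{m,t'}) with t' = t+1 ranging over 1..T. *)
Definition prevc (T : nat) (t : 'I_T) : 'I_T.+1 := widen_ord (leqnSn T) t.
Definition nextc (T : nat) (t : 'I_T) : 'I_T.+1 := lift ord0 t.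

Definition Nmi (Omega : finType) M T (x : array Omega M T) (m : 'I_M) (i : Omega) : nat :=
  #|[set t : 'I_T | x m (prevc t) == i]|.
Definition Ni (Omega : finType) M T (x : array Omega M T) (i : Omega) : nat :=
  \sum_(m < M) Nmi x m i.
Definition Nij (Omega : finType) M T (x : array Omega M T) (i j : Omega) : nat :=
  \sum_(m < M) #|[set t : 'I_T | (x m (prevc t) == i) && (x m (nextc t) == j)]|.

Definition Phat (R : realType) (Omega : finType) M T (x : array Omega M T) (i j : Omega) : R :=
  if (0 < Ni x i)%N then (Nij x i j)%:R / (Ni x i)%:R else 1 / (#|Omega|)%:R.

Definition Ptilde (R : realType) (Omega : finType) M T (P : 'I_M -> Omega -> Omega -> R)
    (x : array Omega M T) (i j : Omega) : R :=
  if (0 < Ni x i)%N then \sum_(m < M) ((Nmi x m i)%:R / (Ni x i)%:R) * P m i j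
  else 1 / (#|Omega|)%:R.

Definition row_l1_dist (R : realType) (Omega : finType) M T (P : 'I_M -> Omega -> Omega -> R)
    (x : array Omega M T) (i : Omega) : R :=
  \sum_(j : Omega) `|Phat R x i j - Ptilde P x i j|.

Definition is_distribution (R : realType) (Omega : finType) (mu : Omega -> R) : Prop :=
  (forall a, 0 <= mu a) /\ \sum_(a : Omega) mu a = 1.
Definition is_stochastic (R : realType) (Omega : finType) (Q : Omega -> Omega -> R) : Prop :=
  forall a, is_distribution (Q a).

(* Law of the random array whose rows are independent, row m being a Markov
   chain with initial distribution mu m and transition matrix P m. *)
Definition markov_array_law (R : realType) (Omega : finType) M T
    (mu : 'I_M -> Omega -> R) (P : 'I_M -> Omega -> Omega -> R) (x : array Omega M T) : R :=
  \prod_(m < M) (mu m (x m ord0) * \prod_(t < T) P m (x m (prevc t)) (x m (nextc t))).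

Definition Prob (R : realType) (Omega : finType) M T
    (mu : 'I_M -> Omega -> R) (P : 'I_M -> Omega -> Omega -> R) (A : pred (array Omega M T)) : R :=
  \sum_(x : array Omega M T | A x) markov_array_law mu P x.

From HB Require Import structures.
From mathcomp Require Import all_boot all_order all_algebra.
From mathcomp Require Import reals sequences exp.
From mathcomp Require Import topology normedtype.
From mathcomp Require Import ring lra.
Import Order.TTheory GRing.Theory Num.Theory.
Set Implicit Arguments. Unset Strict Implicit. Unset Printing Implicit Defensive.
Local Open Scope ring_scope.

(* Let A be the set of states j with Ptilde_{i,j} <= Phat_{i,j}. When N_i > 0 both rows
   sum to 1, so the l1 distance equals 2 (Phat - Ptilde)(i, A) = 2 S_A / N_i, where
   S_A = N_{i,A} - sum_m N_{m,i} P_m(i, A) counts the transitions out of i that land in A,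
   each centred by its conditional probability. A centred indicator has exponential
   moment at most exp(lam^2 / 4) for |lam| <= 3/2, so exp(lam S_A - lam^2 N_i / 4) is a
   product of one-step factors that turn every row into a substochastic chain; its mean
   is therefore at most 1. A Chernoff bound with lam = 3 eps s1 / (4 s2) and a union bound
   over the 2^|Omega| - 2 proper nonempty sets A give the rate
   (2^|Omega| - 2) exp(-15 eps^2 s1^2 / (64 s2)), which together with the trivial bound 1
   is below the stated one. *)

Lemma double_exp3_le_fact n : (2 * 3 ^ n <= n.+2`!)%N.
Proof.
elim: n => [//|n IH]; rewrite factS expnS mulnCA.
exact: leq_mul.
Qed.

Section ExpBounds.
Variable R : realType.
Implicit Types y : R.

Lemma exp_coeff_le_geometric y n : `|y| <= 3/2 ->
  y ^+ n.+2 / (n.+2`!)%:R <= y ^+ 2 * (2^-1) ^+ n.+1.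
Proof.
move=> hy.
have hfact : (2 * 3 ^+ n : R) <= (n.+2`!)%:R.
  by rewrite -natrX -natrM ler_nat double_exp3_le_fact.
have hyn : `|y| ^+ n <= (3/2) ^+ n by apply: lerXn2r => //; rewrite nnegrE; lra.
have hyn2 : y ^+ n.+2 <= y ^+ 2 * (3/2) ^+ n.
  rewrite (le_trans (ler_norm _)) // normrX -addn2 exprD mulrC real_normK ?num_real //.
  by rewrite ler_wpM2l ?sqr_ge0.
have e32 : (3/2 : R) ^+ n = 2^-1 ^+ n.+1 * (2 * 3 ^+ n).
  by rewrite exprS exprMn; field.
have h32 : (3/2 : R) ^+ n <= 2^-1 ^+ n.+1 * (n.+2`!)%:R.
  by rewrite e32 ler_wpM2l // exprn_ge0 // invr_ge0.
by rewrite ler_pdivrMr ?ltr0n ?fact_gt0 // -mulrA (le_trans hyn2) // ler_wpM2l ?sqr_ge0.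
Qed.

Lemma exp_partial_sum_le y n : `|y| <= 3/2 ->
  \sum_(0 <= k < n.+2) y ^+ k / (k`!)%:R <= 1 + y + y ^+ 2 * (1 - (2^-1) ^+ n).
Proof.
move=> hy; elim: n => [|n IH].
  by rewrite !big_nat_recr //= big_nil add0r expr0 expr1 !divr1 subrr mulr0 addr0.
rewrite big_nat_recr //=.
have := exp_coeff_le_geometric n hy; move: IH; rewrite !exprS; nra.
Qed.

Lemma expR_le_1DxDsqr y : `|y| <= 3/2 -> expR y <= 1 + y + y ^+ 2.
Proof.
move=> hy; apply: limr_le; first exact: is_cvg_series_exp_coeff.
near=> k.
have hk : (2 <= k)%N by near: k; exists 2%N.
rewrite -(subnK hk) /series /= addn2 (le_trans (exp_partial_sum_le (k - 2) hy)) //.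
have : (0 : R) <= 2^-1 ^+ (k - 2) by rewrite exprn_ge0 // invr_ge0.
have := sqr_ge0 y; nra.
Unshelve. all: by end_near.
Qed.

Section CenteredMoments.
Variables (I : finType) (q f : I -> R).
Hypotheses (q_ge0 : forall v, 0 <= q v) (q_sum1 : \sum_v q v = 1).
Hypothesis f01 : forall v, 0 <= f v <= 1.
Let p := \sum_v q v * f v.

Lemma sum_centered : \sum_v q v * (f v - p) = 0.
Proof.
under eq_bigr do rewrite mulrBr.
by rewrite sumrB -mulr_suml q_sum1 mul1r subrr.
Qed.

Lemma variance_le_quarter : \sum_v q v * (f v - p) ^+ 2 <= 1/4.
Proof.
apply: le_trans (_ : \sum_v (q v * f v * (1 - 2 * p) + q v * p ^+ 2) <= _).
  apply: ler_sum => v _.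
  have /(ler_wpM2l (q_ge0 v)) : f v * f v <= f v by have := f01 v; nra.
  nra.
rewrite big_split /= -!mulr_suml q_sum1 -/p; have := sqr_ge0 (p - 1/2); nra.
Qed.

Lemma centered_mgf_le lam : `|lam| <= 3/2 ->
  \sum_v q v * expR (lam * (f v - p)) <= expR (lam ^+ 2 / 4).
Proof.
move=> hlam.
have p01 : 0 <= p <= 1.
  apply/andP; split; first by apply: sumr_ge0 => v _; have := f01 v; have := q_ge0 v; nra.
  rewrite -q_sum1; apply: ler_sum => v _; have := f01 v; have := q_ge0 v; nra.
apply: le_trans (_ : \sum_v q v * (1 + lam * (f v - p) + lam ^+ 2 * (f v - p) ^+ 2) <= _).
  apply: ler_sum => v _; rewrite ler_wpM2l // -exprMn expR_le_1DxDsqr //.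
  rewrite normrM (le_trans (ler_wpM2l (normr_ge0 _) (_ : `|f v - p| <= 1))) ?mulr1 //.
  by rewrite ler_norml; have := f01 v; move: p01 => /andP[? ?]; lra.
rewrite (eq_bigr (fun v => q v + lam * (q v * (f v - p)) + lam ^+ 2 * (q v * (f v - p) ^+ 2)));
  last by move=> v _; ring.
rewrite !big_split /= -!mulr_sumr q_sum1 sum_centered mulr0 addr0.
apply: le_trans (expR_ge1Dx _); rewrite lerD2l mulrC ler_pdivlMr //.
by have := variance_le_quarter; have := sqr_ge0 lam; nra.
Qed.

End CenteredMoments.
End ExpBounds.

Section PathSums.
Variables (R : realType) (Omega : finType).

Definition ffun_cons n (u : Omega) (z : {ffun 'I_n -> Omega}) : {ffun 'I_n.+1 -> Omega} :=
  [ffun k => if unlift ord0 k is Some k' then z k' else u].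

Lemma ffun_cons0 n u (z : {ffun 'I_n -> Omega}) : ffun_cons u z ord0 = u.
Proof. by rewrite ffunE unlift_none. Qed.

Lemma ffun_consS n u (z : {ffun 'I_n -> Omega}) k : ffun_cons u z (lift ord0 k) = z k.
Proof. by rewrite ffunE liftK. Qed.

Lemma sum_ffun_recl n (F : {ffun 'I_n.+1 -> Omega} -> R) :
  \sum_y F y = \sum_u \sum_(z : {ffun 'I_n -> Omega}) F (ffun_cons u z).
Proof.
rewrite pair_big /= (reindex (fun uz => ffun_cons uz.1 uz.2)) //.
exists (fun y : {ffun 'I_n.+1 -> Omega} => (y ord0, [ffun k : 'I_n => y (lift ord0 k)]))
  => [[u z] _ | y _].
  by rewrite ffun_cons0; congr pair; apply/ffunP => k; rewrite ffunE ffun_consS.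
apply/ffunP => k; rewrite ffunE.
by case: unliftP => [j ->|->]; rewrite ?ffunE.
Qed.

Lemma prevc_lift n (t : 'I_n) : prevc (lift ord0 t) = lift ord0 (prevc t).
Proof. exact: val_inj. Qed.

Lemma nextc_lift n (t : 'I_n) : nextc (lift ord0 t) = lift ord0 (nextc t).
Proof. exact: val_inj. Qed.

Lemma prevc0 n : prevc (ord0 : 'I_n.+1) = ord0.
Proof. exact: val_inj. Qed.

Lemma nextc0 n : nextc (ord0 : 'I_n.+1) = lift ord0 ord0.
Proof. exact: val_inj. Qed.

Lemma sum_markov_path_le1 (Q : Omega -> Omega -> R) n (nu : Omega -> R) :
  (forall u v, 0 <= Q u v) -> (forall u, \sum_v Q u v <= 1) ->
  (forall u, 0 <= nu u) -> \sum_u nu u <= 1 ->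
  \sum_(y : {ffun 'I_n.+1 -> Omega})
    nu (y ord0) * \prod_(t < n) Q (y (prevc t)) (y (nextc t)) <= 1.
Proof.
move=> Q_ge0 Q_row_le1.
elim: n nu => [|n IH] nu nu_ge0 nu_le1; rewrite sum_ffun_recl (le_trans _ nu_le1) //;
  apply: ler_sum => u _.
  under eq_bigr do rewrite big_ord0 mulr1 ffun_cons0.
  by rewrite sumr_const card_ffun card_ord expn0 mulr1n.
under eq_bigr do rewrite big_ord_recl prevc0 nextc0 ffun_cons0 ffun_consS.
under eq_bigr do under eq_bigr do rewrite prevc_lift nextc_lift !ffun_consS.
by rewrite -mulr_sumr ler_piMr // IH.
Qed.

Variables (M T : nat) (nu : 'I_M -> Omega -> R) (Q : 'I_M -> Omega -> Omega -> R).
Hypotheses (nu_ge0 : forall m u, 0 <= nu m u) (Q_ge0 : forall m u v, 0 <= Q m u v).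

Lemma markov_array_law_ge0 (x : array Omega M T) : 0 <= markov_array_law nu Q x.
Proof. by rewrite prodr_ge0 // => m _; rewrite mulr_ge0 ?prodr_ge0. Qed.

Lemma sum_markov_array_law_le1 :
  (forall m, \sum_u nu m u <= 1) -> (forall m u, \sum_v Q m u v <= 1) ->
  \sum_(x : array Omega M T) markov_array_law nu Q x <= 1.
Proof.
move=> nu_le1 Q_row_le1.
rewrite -(bigA_distr_bigA (fun m (y : {ffun 'I_T.+1 -> Omega}) =>
  nu m (y ord0) * \prod_(t < T) Q m (y (prevc t)) (y (nextc t)))) /=.
apply: prodr_ile1 => m _; rewrite sum_markov_path_le1 ?andbT //.
by rewrite sumr_ge0 // => y _; rewrite mulr_ge0 ?prodr_ge0.
Qed.

End PathSums.

Lemma natr_card_set (R : pzSemiRingType) (I : finType) (p : pred I) :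
  (#|[set t | p t]|)%:R = \sum_t (p t)%:R :> R.
Proof.
rewrite -sum1_card natr_sum big_mkcond; apply: eq_bigr => t _.
by rewrite inE; case: (p t).
Qed.

Lemma sum_delta (R : pzSemiRingType) (I : finType) (y : I) (c : I -> R) :
  \sum_j c j * (y == j)%:R = c y.
Proof.
rewrite (bigD1 y) //= eqxx mulr1 big1 ?addr0 // => j.
by rewrite eq_sym => /negbTE ->; rewrite mulr0.
Qed.

Lemma card_proper_subsets (I : finType) : (0 < #|I|)%N ->
  #|[pred A : {set I} | (A != set0) && (A != setT)]|.+2 = (2 ^ #|I|)%N.
Proof.
move=> /card_gt0P[a _].
have -> : (2 ^ #|I|)%N = #|{set I}|.
  by rewrite -cardsT -card_powerset powersetT cardsT.
rewrite [in RHS](cardD1 set0) [in RHS](cardD1 setT) !inE /=.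
have -> : (setT : {set I}) != set0 by apply/set0Pn; exists a; rewrite inE.
by rewrite !add1n; congr _.+2; apply: eq_card => A; rewrite !inE andbT andbC.
Qed.

Section RowDeviation.
Variables (R : realType) (Omega : finType) (M T : nat).
Variable P : 'I_M -> Omega -> Omega -> R.
Hypothesis hP : forall m, is_stochastic (P m).
Variable i : Omega.
Implicit Types (x : array Omega M T) (A : {set Omega}).

Definition indic A (v : Omega) : R := (v \in A)%:R.

Definition leaves_i x m (t : 'I_T) : R := (x m (prevc t) == i)%:R.

Definition trans_prob m A : R := \sum_v P m i v * indic A v.

Definition dev_count A x : R :=
  \sum_m \sum_t leaves_i x m t * (indic A (x m (nextc t)) - trans_prob m A).

Lemma P_ge0 m u v : 0 <= P m u v.
Proof. by case: (hP m u). Qed.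

Lemma Nmi_natrE x m : (Nmi x m i)%:R = \sum_t leaves_i x m t.
Proof. exact: natr_card_set. Qed.

Lemma Ni_natrE x : (Ni x i)%:R = \sum_m \sum_t leaves_i x m t.
Proof. by rewrite natr_sum; apply: eq_bigr => m _; rewrite Nmi_natrE. Qed.

Lemma Nij_natrE x j :
  (Nij x i j)%:R = \sum_m \sum_t leaves_i x m t * (x m (nextc t) == j)%:R.
Proof.
rewrite natr_sum; apply: eq_bigr => m _; rewrite natr_card_set.
by apply: eq_bigr => t _; rewrite /leaves_i; case: (_ == i); rewrite ?mul1r ?mul0r.
Qed.

Lemma trans_prob_ge0 m A : 0 <= trans_prob m A.
Proof. by rewrite sumr_ge0 // => v _; rewrite mulr_ge0 ?P_ge0. Qed.

Lemma trans_prob_setT m : trans_prob m setT = 1.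
Proof.
case: (hP m i) => _ <-; apply: eq_bigr => v _.
by rewrite /indic inE mulr1.
Qed.

Lemma dev_count_set0 x : dev_count set0 x = 0.
Proof.
rewrite /dev_count big1 // => m _; rewrite big1 // => t _.
by rewrite /trans_prob big1 => [|v _]; rewrite /indic inE ?mulr0 // subr0 mulr0.
Qed.

Lemma dev_count_setT x : dev_count setT x = 0.
Proof.
rewrite /dev_count big1 // => m _; rewrite big1 // => t _.
by rewrite trans_prob_setT /indic inE subrr mulr0.
Qed.

Lemma dev_count_le_Ni A x : dev_count A x <= (Ni x i)%:R.
Proof.
rewrite Ni_natrE; apply: ler_sum => m _; apply: ler_sum => t _.
have := trans_prob_ge0 m A; rewrite /leaves_i /indic.
by case: (_ == i); case: (_ \in A); rewrite /= ?mul1r ?mul0r; lra.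
Qed.

Lemma dev_count_indicE A x : dev_count A x =
  \sum_j indic A j * ((Nij x i j)%:R - \sum_m (Nmi x m i)%:R * P m i j).
Proof.
rewrite /dev_count.
under eq_bigr do under eq_bigr do rewrite mulrBr.
under eq_bigr do rewrite sumrB.
under [in RHS]eq_bigr do rewrite mulrBr.
rewrite !sumrB; congr (_ - _).
  under [in RHS]eq_bigr do rewrite Nij_natrE mulr_sumr.
  rewrite [RHS]exchange_big; apply: eq_bigr => m _.
  under [in RHS]eq_bigr do rewrite mulr_sumr.
  rewrite [RHS]exchange_big; apply: eq_bigr => t _.
  by under eq_bigr do rewrite mulrCA; rewrite -mulr_sumr sum_delta.
under [in RHS]eq_bigr do rewrite mulr_sumr.
rewrite [RHS]exchange_big; apply: eq_bigr => m _.
rewrite -mulr_suml -Nmi_natrE mulr_sumr; apply: eq_bigr => j _.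
by rewrite mulrA mulrC.
Qed.

Lemma row_devE x j : (0 < Ni x i)%N ->
  Phat R x i j - Ptilde P x i j =
  ((Nij x i j)%:R - \sum_m (Nmi x m i)%:R * P m i j) / (Ni x i)%:R.
Proof.
move=> Ni_gt0; rewrite /Phat /Ptilde Ni_gt0 mulrBl mulr_suml.
by congr (_ - _); apply: eq_bigr => m _; rewrite mulrAC.
Qed.

Lemma sum_indic_row_dev A x : (0 < Ni x i)%N ->
  \sum_j indic A j * (Phat R x i j - Ptilde P x i j) = dev_count A x / (Ni x i)%:R.
Proof.
move=> Ni_gt0; rewrite dev_count_indicE mulr_suml.
by apply: eq_bigr => j _; rewrite row_devE // mulrA.
Qed.

Lemma sum_row_dev x : \sum_j (Phat R x i j - Ptilde P x i j) = 0.
Proof.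
have [Ni0 | Ni_gt0] := posnP (Ni x i).
  by rewrite big1 // => j _; rewrite /Phat /Ptilde Ni0 subrr.
have := sum_indic_row_dev setT Ni_gt0; rewrite dev_count_setT mul0r.
by apply: etrans; apply: eq_bigr => j _; rewrite /indic inE mul1r.
Qed.

Lemma row_l1_dist_pos_part x : (0 < Ni x i)%N ->
  row_l1_dist P x i =
  2 * (dev_count [set j | Ptilde P x i j <= Phat R x i j] x / (Ni x i)%:R).
Proof.
move=> Ni_gt0; rewrite -sum_indic_row_dev // mulr_sumr.
rewrite -[RHS]subr0 -[X in _ = _ - X](sum_row_dev x) -sumrB; apply: eq_bigr => j _.
by rewrite /indic inE; case: lerP => _; rewrite ?mul1r ?mul0r; ring.
Qed.

Lemma row_l1_dist_le2 x : row_l1_dist P x i <= 2.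
Proof.
have [Ni0 | Ni_gt0] := posnP (Ni x i).
  by rewrite /row_l1_dist big1 // => j _; rewrite /Phat /Ptilde Ni0 subrr normr0.
rewrite row_l1_dist_pos_part // ler_piMr // ler_pdivrMr ?ltr0n // mul1r.
exact: dev_count_le_Ni.
Qed.

Lemma exists_large_dev_count x (eps s : R) : 0 < eps -> 0 < s ->
  eps <= row_l1_dist P x i -> s <= (Ni x i)%:R ->
  exists2 A, (A != set0) && (A != setT) & eps * s / 2 <= dev_count A x.
Proof.
move=> eps_gt0 s_gt0 l1_ge s_le.
have N_gt0 : 0 < (Ni x i)%:R :> R by lra.
have Ni_gt0 : (0 < Ni x i)%N by rewrite -(ltr0n R).
pose A := [set j | Ptilde P x i j <= Phat R x i j].
have dev_ge : eps * s / 2 <= dev_count A x.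
  move: l1_ge; rewrite row_l1_dist_pos_part // -/A mulrA ler_pdivlMr // => h.
  have : eps * s <= eps * (Ni x i)%:R by rewrite ler_pM2l.
  lra.
have es_gt0 := mulr_gt0 eps_gt0 s_gt0.
exists A => //; apply/andP; split; apply/eqP => hA; move: dev_ge.
  by rewrite hA dev_count_set0; lra.
by rewrite hA dev_count_setT; lra.
Qed.

Variable mu : 'I_M -> Omega -> R.
Hypothesis hmu : forall m, is_distribution (mu m).

Lemma mu_ge0 m u : 0 <= mu m u.
Proof. by case: (hmu m). Qed.

Lemma law_ge0 x : 0 <= markov_array_law mu P x.
Proof. exact: markov_array_law_ge0 mu_ge0 P_ge0 x. Qed.

Lemma Prob_le1 (E : pred (array Omega M T)) : Prob mu P E <= 1.
Proof.
apply: le_trans (_ : \sum_(x : array Omega M T) markov_array_law mu P x <= 1).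
  by rewrite [leRHS](bigID E) /= lerDl sumr_ge0 // => x _; apply: law_ge0.
apply: sum_markov_array_law_le1 => [m u | m u v | m | m u].
- exact: mu_ge0.
- exact: P_ge0.
- by case: (hmu m) => _ ->.
- by case: (hP m u) => _ ->.
Qed.

Lemma Prob_le_sum (I : finType) (S : pred I) (E : pred (array Omega M T))
    (F : I -> pred (array Omega M T)) :
  (forall x, E x -> exists2 A, S A & F A x) ->
  Prob mu P E <= \sum_(A | S A) Prob mu P (F A).
Proof.
move=> EF; rewrite /Prob.
under [X in _ <= X]eq_bigr do rewrite big_mkcond.
rewrite exchange_big big_mkcond /=; apply: ler_sum => x _.
case: ifP => [Ex | _].
  have [A SA FAx] := EF x Ex.
  rewrite (bigD1 A) //= FAx lerDl sumr_ge0 // => B _.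
  by case: ifP => // _; apply: law_ge0.
by rewrite sumr_ge0 // => A _; case: ifP => // _; apply: law_ge0.
Qed.

Definition tilt (lam : R) A m (u v : Omega) : R :=
  if u == i then expR (lam * (indic A v - trans_prob m A) - lam ^+ 2 / 4) else 1.

Lemma tilt_ge0 lam A m u v : 0 <= tilt lam A m u v.
Proof. by rewrite /tilt; case: ifP; rewrite ?expR_ge0. Qed.

Lemma sum_tilt_le1 lam A m u : `|lam| <= 3/2 -> \sum_v P m u v * tilt lam A m u v <= 1.
Proof.
move=> hlam; rewrite /tilt; case: eqP => [-> | _]; last first.
  by under eq_bigr do rewrite mulr1; case: (hP m u) => _ ->.
under eq_bigr do rewrite expRD mulrA.
rewrite -mulr_suml.
have indic01 v : 0 <= indic A v <= 1.
  by rewrite /indic; case: (v \in A); rewrite /= ?lexx ?ler01.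
have mgf := centered_mgf_le (P_ge0 m i) (proj2 (hP m i)) indic01 hlam.
apply: le_trans (ler_wpM2r (expR_ge0 _) mgf) _.
by rewrite -expRD addrN expR0.
Qed.

Lemma expR_dev_countE lam A x :
  expR (lam * dev_count A x - lam ^+ 2 / 4 * (Ni x i)%:R) =
  \prod_m \prod_t tilt lam A m (x m (prevc t)) (x m (nextc t)).
Proof.
rewrite Ni_natrE /dev_count !mulr_sumr -sumrB expR_sum; apply: eq_bigr => m _.
rewrite !mulr_sumr -sumrB expR_sum; apply: eq_bigr => t _.
rewrite /tilt /leaves_i; case: (_ == i); last by rewrite !mul0r !mulr0 subrr expR0.
by rewrite !mul1r mulr1.
Qed.

Lemma mean_tilted_le1 lam A : `|lam| <= 3/2 ->
  \sum_(x : array Omega M T) markov_array_law mu P x *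
    expR (lam * dev_count A x - lam ^+ 2 / 4 * (Ni x i)%:R) <= 1.
Proof.
move=> hlam.
under eq_bigr do rewrite expR_dev_countE -big_split /=.
under eq_bigr do under eq_bigr do rewrite -mulrA -big_split /=.
apply: (@sum_markov_array_law_le1 _ _ _ _ _ (fun m u v => P m u v * tilt lam A m u v))
  => [m u | m u v | m | m u].
- exact: mu_ge0.
- by rewrite mulr_ge0 ?P_ge0 ?tilt_ge0.
- by case: (hmu m) => _ ->.
- exact: sum_tilt_le1.
Qed.

Lemma chernoff_dev_count A lam a s : 0 <= lam <= 3/2 ->
  Prob mu P (fun x : array Omega M T => (a <= dev_count A x) && ((Ni x i)%:R <= s))
  <= expR (- (lam * a) + lam ^+ 2 / 4 * s).
Proof.
move=> /andP[lam_ge0 lam_le]; rewrite /Prob.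
set c := expR _.
pose w x := markov_array_law mu P x *
  expR (lam * dev_count A x - lam ^+ 2 / 4 * (Ni x i)%:R).
have w_ge0 x : 0 <= w x by rewrite mulr_ge0 ?law_ge0 ?expR_ge0.
apply: le_trans (_ : \sum_(x | (a <= dev_count A x) && ((Ni x i)%:R <= s)) w x * c <= _).
  apply: ler_sum => x /andP[ha hs]; rewrite -mulrA ler_peMr ?law_ge0 // -expRD.
  apply: le_trans (expR_ge1Dx _); rewrite lerDl.
  have : lam ^+ 2 / 4 * (Ni x i)%:R <= lam ^+ 2 / 4 * s.
    by rewrite ler_wpM2l ?divr_ge0 ?sqr_ge0.
  have : lam * a <= lam * dev_count A x by rewrite ler_wpM2l.
  lra.
apply: le_trans (_ : \sum_x w x * c <= _).
  by rewrite [leRHS](bigID (fun x => (a <= dev_count A x) && ((Ni x i)%:R <= s))) /=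
    lerDl sumr_ge0 // => x _; rewrite mulr_ge0 ?expR_ge0.
rewrite -mulr_suml ler_piMl ?expR_ge0 //.
by apply: mean_tilted_le1; rewrite ger0_norm.
Qed.

Lemma prob_large_row_dev_le eps s1 s2 : 0 < eps -> 0 < s1 -> s1 <= s2 ->
  Prob mu P (fun x : array Omega M T =>
      (eps <= row_l1_dist P x i) && (s1 <= (Ni x i)%:R <= s2))
  <= (2 ^+ #|Omega| - 2) * expR (- (15/64 * (eps ^+ 2 * s1 ^+ 2 / s2))).
Proof.
move=> eps_gt0 s1_gt0 s12.
pose proper := [pred A : {set Omega} | (A != set0) && (A != setT)].
have card_gt0 : (0 < #|Omega|)%N by apply/card_gt0P; exists i.
have card_proper : #|proper|%:R = 2 ^+ #|Omega| - 2 :> R.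
  by rewrite -natrX -(card_proper_subsets card_gt0) -addn2 natrD addrK.
have [eps_gt2 | eps_le2] := ltrP 2 eps.
  rewrite /Prob big1 => [|x /andP[l1_ge _]]; last by have := row_l1_dist_le2 x; lra.
  by rewrite mulr_ge0 ?expR_ge0 // -card_proper ler0n.
pose lam := 3 * eps * s1 / (4 * s2).
have lam_range : 0 <= lam <= 3/2.
  by rewrite divr_ge0 ?ler_pdivrMr /=; nra.
apply: le_trans (Prob_le_sum (S := proper)
  (F := fun A x => (eps * s1 / 2 <= dev_count A x) && ((Ni x i)%:R <= s2)) _) _.
  move=> x /andP[l1_ge /andP[s1_le le_s2]].
  have [A A_proper dev_ge] := exists_large_dev_count eps_gt0 s1_gt0 l1_ge s1_le.
  by exists A; rewrite ?dev_ge ?le_s2.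
apply: le_trans (ler_sum _ (fun A _ => chernoff_dev_count A (eps * s1 / 2) s2 lam_range)) _.
have -> : - (lam * (eps * s1 / 2)) + lam ^+ 2 / 4 * s2 =
          - (15/64 * (eps ^+ 2 * s1 ^+ 2 / s2)).
  by rewrite /lam; field; rewrite gt_eqF //; lra.
by rewrite sumr_const -(mulr_natr (expR _)) card_proper mulrC.
Qed.

End RowDeviation.

Section TailArithmetic.
Variable R : realType.

Lemma pow2B2_le (d : nat) (z : R) : (1 <= d)%N -> 0 < z -> (1 + d%:R) * z ^+ 2 < 1 ->
  (2 ^+ d - 2) * z ^+ d <= (1 + d%:R) * z ^+ 2.
Proof.
case: d => [//|[|[|d]]] _ z_gt0 small.
- by rewrite expr1 subrr mul0r mulr_ge0 ?sqr_ge0 //; lra.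
- by have := sqr_ge0 z; rewrite -!natrX /=; nra.
have d4 : (4 : R) <= 1 + d.+3%:R by rewrite -addn3 natrD; have := ler0n R d; lra.
have z2_lt : z ^+ 2 < 1/4 by have := sqr_ge0 z; nra.
have twoz_le1 : 2 * z <= 1 by move: z2_lt; rewrite expr2; nra.
have pow_le1 : (2 * z) ^+ d.+1 <= 1 by rewrite exprn_ile1 //; lra.
have -> : (2 ^+ d.+3 - 2) * z ^+ d.+3 = 4 * z ^+ 2 * (2 * z) ^+ d.+1 - 2 * z ^+ d.+3.
  by rewrite exprMn !exprS; ring.
have : 0 <= 2 * z ^+ d.+3 by rewrite mulr_ge0 ?exprn_ge0 //; lra.
have := sqr_ge0 z; nra.
Qed.

Lemma tail_rate_le (d : nat) (eps s1 s2 p : R) :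
  (1 <= d)%N -> 0 < eps -> 0 < s1 -> s1 <= s2 ->
  p <= 1 -> p <= (2 ^+ d - 2) * expR (- (15/64 * (eps ^+ 2 * s1 ^+ 2 / s2))) ->
  p <= (1 + d%:R) * expR (- (3 * eps ^+ 2 * s1) /
          (6 * Num.sqrt 2 * d%:R * s2 / s1 + 2 * Num.sqrt 2 * Num.sqrt d%:R * eps)).
Proof.
move=> d_ge1 eps_gt0 s1_gt0 s12 p_le1 p_le.
have d_gt0 : (0 : R) < d%:R by rewrite ltr0n.
set k := Num.sqrt (2 : R).
have k_gt0 : 0 < k by rewrite sqrtr_gt0.
have k_ge : 16/15 <= k.
  have : k ^+ 2 = 2 by rewrite sqr_sqrtr.
  nra.
set E := eps ^+ 2 * s1 ^+ 2 / (2 * k * d%:R * s2).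
have E_ge0 : 0 <= E by rewrite divr_ge0 ?mulr_ge0 ?sqr_ge0 //; nra.
(* z ^+ d bounds the union-bound rate because 15/64 >= 1 / (4 sqrt 2), and z ^+ 2 is
   below the target rate, whose exponent is at most E. *)
set z := expR (- (E / 2)).
have rate_le : expR (- (15/64 * (eps ^+ 2 * s1 ^+ 2 / s2))) <= z ^+ d.
  rewrite -expRM_natl ler_expR.
  have -> : d%:R * - (E / 2) = - (eps ^+ 2 * s1 ^+ 2 / s2 / (4 * k)).
    by rewrite /E; field; rewrite !gt_eqF //; lra.
  rewrite lerN2 ler_pdivrMr ?mulr_gt0 //.
  have : 0 <= eps ^+ 2 * s1 ^+ 2 / s2 by rewrite divr_ge0 ?mulr_ge0 ?sqr_ge0 //; lra.
  nra.
have z2_le : z ^+ 2 <= expR (- (3 * eps ^+ 2 * s1) /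
    (6 * k * d%:R * s2 / s1 + 2 * k * Num.sqrt d%:R * eps)).
  rewrite -expRM_natl ler_expR.
  have -> : 2%:R * - (E / 2) = - E by field.
  rewrite mulNr lerN2 ler_pdivrMr; last first.
    rewrite ltr_wpDr ?mulr_ge0 ?sqrtr_ge0 //; try lra.
    by rewrite divr_gt0 // !mulr_gt0 //; lra.
  rewrite mulrDr.
  have -> : E * (6 * k * d%:R * s2 / s1) = 3 * eps ^+ 2 * s1.
    by rewrite /E; field; rewrite !gt_eqF //; lra.
  by rewrite lerDl mulr_ge0 // !mulr_ge0 ?sqrtr_ge0 //; lra.
have [large | small] := lerP 1 ((1 + d%:R) * z ^+ 2).
  by rewrite (le_trans p_le1) // (le_trans large) // ler_wpM2l //; lra.
rewrite (le_trans p_le) // (le_trans _ (ler_wpM2l _ z2_le)) //; last lra.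
rewrite (le_trans _ (pow2B2_le d_ge1 (expR_gt0 _) small)) // ler_wpM2l //.
by rewrite subr_ge0 ler_eXnr // ler1n.
Qed.

End TailArithmetic.

Theorem proposition6p4 (R : realType) (Omega : finType) (M T : nat)
    (hM : (1 <= M)%N) (hT : (1 <= T)%N)
    (mu : 'I_M -> Omega -> R) (P : 'I_M -> Omega -> Omega -> R)
    (hmu : forall m, is_distribution (mu m))
    (hP : forall m, is_stochastic (P m))
    (i : Omega) (eps s1 s2 : R)
    (heps : 0 < eps) (hs1 : 0 < s1) (hs12 : s1 <= s2) :
  Prob mu P (fun x : array Omega M T =>
      (eps <= row_l1_dist P x i) && (s1 <= (Ni x i)%:R <= s2))
  <= (1 + (#|Omega|)%:R) *
     expR (- (3 * eps ^+ 2 * s1) /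
            (6 * Num.sqrt 2 * (#|Omega|)%:R * s2 / s1
             + 2 * Num.sqrt 2 * Num.sqrt ((#|Omega|)%:R) * eps)).
Proof.
have card_ge1 : (1 <= #|Omega|)%N by apply/card_gt0P; exists i.
apply: (tail_rate_le card_ge1 heps hs1 hs12 (Prob_le1 hP hmu _)).
exact: (prob_large_row_dev_le T hP i hmu heps hs1 hs12).
Qed.
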